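(* Let $\mathscr K$ be a quasivariety of structures, let $\mathbf F$ be a $\mathscr K$-free structure, and let $\varepsilon$ be an endomorphism of $\mathbf F$. Let $\alpha,\beta_1,\dots,\beta_m$ be atomic formulae over $\mathbf F$. If, in the lattice $\operatorname{Con}_{\mathscr K}\mathbf F$, \[ \operatorname{con}_{\mathscr K}\alpha \le \bigvee_{j=1}^m \operatorname{con}_{\mathscr K}\beta_j, \] then \[ \operatorname{con}_{\mathscr K}(\varepsilon\alpha) \le \bigvee_{j=1}^m \operatorname{con}_{\mathscr K}(\varepsilon\beta_j). \]
   Context: Structures have a signature consisting of function symbols and relation symbols with arities; homomorphisms preserve operations and map relations into relations. A congruence on a structure $\mathbf A$ is a pair $\theta=\langle\theta_0,\theta_1\rangle$ where $\theta_0$ is an equivalence relation on $A$ compatible with the operations, and $\theta_1=\bigcup_R\theta_1^R$ where for each relation symbol $R$ of arity $n$, $R^{\mathbf A}\subseteq\theta_1^R\subseteq A^n$ and $\theta_1^R$ is closed under componentwise $\theta_0$-equivalence. Quotient structures $\mathbf A/\theta$ are formed in the natural way. A quasivariety is a class of structures closed under substructures, direct products and ultraproducts (equivalently, the class of models of a set of quasi-identities $\&_{i}\alpha_i\Rightarrow\beta$ with atomic $\alpha_i,\beta$); equality is interpreted as true equality. An atomic formula over $\mathbf F$ is either $s\approx t$ with $s,t\in F$ or $R(\mathbf s)$ with $R$ a relation symbol and $\mathbf s$ a tuple of elements of $F$ of the arity of $R$. A congruence $\psi$ of $\mathbf F$ is a $\mathscr K$-congruence if $\mathbf F/\psi\in\mathscr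 K$; these form the complete lattice $\operatorname{Con}_{\mathscr K}\mathbf F$. We write $\alpha\in\psi$ if $\alpha$ is $s\approx t$ with $(s,t)\in\psi_0$, or $\alpha$ is $R(\mathbf s)$ with $\mathbf s\in\psi_1^R$. For a set $S$ of atomic formulae, $\operatorname{con}_{\mathscr K}S$ is the intersection of all congruences $\psi$ of $\mathbf F$ with $\mathbf F/\psi\in\mathscr K$ and $S\subseteq\psi$. For an endomorphism $\varepsilon$, $\varepsilon\alpha$ denotes $\varepsilon s\approx\varepsilon t$ if $\alpha$ is $s\approx t$, and $R(\varepsilon\mathbf s)$ (componentwise) if $\alpha$ is $R(\mathbf s)$. *)

From mathcomp Require Import ssreflect ssrfun ssrbool eqtype ssrnat seq fintype.
From Stdlib Require Import ClassicalEpsilon.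
Set Implicit Arguments. Unset Strict Implicit. Unset Printing Implicit Defensive.

Record signature := Signature {
  fsym : Type; far : fsym -> nat;
  rsym : Type; rar : rsym -> nat }.

Section Structures.
Variable sg : signature.

Record structure := Structure {
  car :> Type;
  fop : forall f : fsym sg, ('I_(far f) -> car) -> car;
  frel : forall r : rsym sg, ('I_(rar r) -> car) -> Prop }.
Arguments fop {s} f _.
Arguments frel {s} r _.

Definition hom (A B : structure) (h : A -> B) : Prop :=
  (forall f (s : 'I_(far f) -> A), h (fop f s) = fop f (fun i => h (s i))) /\
  (forall r (s : 'I_(rar r) -> A), frel r s -> frel r (fun i => h (s i))).

Inductive atom (X : Type) : Type :=
  | AEq : X -> X -> atom X
  | ARel : forall r : rsym sg, ('I_(rar r) -> X) -> atom X.
Arguments AEq {X} _ _.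
Arguments ARel {X} r _.

Definition atom_map (X Y : Type) (e : X -> Y) (a : atom X) : atom Y :=
  match a with
  | AEq s t => AEq (e s) (e t)
  | ARel r s => ARel r (fun i => e (s i))
  end.

Inductive term : Type :=
  | Var : nat -> term
  | App : forall f : fsym sg, ('I_(far f) -> term) -> term.
Arguments App f _ : assert.

Fixpoint eval (A : structure) (v : nat -> A) (t : term) : A :=
  match t with
  | Var n => v n
  | App f ts => fop f (fun i => eval v (ts i))
  end.

Definition holds (A : structure) (v : nat -> A) (a : atom term) : Prop :=
  match a with
  | AEq s t => eval v s = eval v t
  | ARel r s => frel r (fun i => eval v (s i))
  end.

(* Quasi-identity  &_{i} alpha_i => beta  (finitely many premises). *)
Definition quasi_identity := (seq (atom term) * atom term)%type.

Definition satisfies (A : structure) (q : quasi_identity) : Prop :=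
  forall v : nat -> A, (forall a, List.In a q.1 -> holds v a) -> holds v q.2.

Definition quasivariety (K : structure -> Prop) : Prop :=
  exists Q : quasi_identity -> Prop,
    forall A, K A <-> (forall q, Q q -> satisfies A q).

(* Subuniverse generated by X is everything. *)
Definition generates (A : structure) (X : A -> Prop) : Prop :=
  forall P : A -> Prop, (forall x, X x -> P x) ->
    (forall f (s : 'I_(far f) -> A), (forall i, P (s i)) -> P (fop f s)) ->
    forall x, P x.

Definition K_free (K : structure -> Prop) (F : structure) : Prop :=
  K F /\ exists X : F -> Prop, generates X /\
    forall B : structure, K B -> forall g : {x : F | X x} -> B,
      exists h : F -> B, hom h /\ forall x (hx : X x), h x = g (exist _ x hx).

Record cpair (A : structure) := CPair {
  c0 : A -> A -> Prop;
  c1 : forall r : rsym sg, ('I_(rar r) -> A) -> Prop }.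
Arguments c0 {A} c _ _.
Arguments c1 {A} c r _.

Definition congruence (A : structure) (th : cpair A) : Prop :=
  (forall x, c0 th x x) /\
      (forall x y, c0 th x y -> c0 th y x) /\
      (forall x y z, c0 th x y -> c0 th y z -> c0 th x z) /\
      (forall f (s t : 'I_(far f) -> A), (forall i, c0 th (s i) (t i)) ->
          c0 th (fop f s) (fop f t)) /\
      (forall r (s : 'I_(rar r) -> A), frel r s -> c1 th r s) /\
      (forall r (s t : 'I_(rar r) -> A), c1 th r s ->
          (forall i, c0 th (s i) (t i)) -> c1 th r t).

(* Quotient structure A/theta: elements are theta_0-classes. *)
Definition qcar (A : structure) (th : cpair A) : Type :=
  {P : A -> Prop | exists x, P = c0 th x}.

Definition qclass (A : structure) (th : cpair A) (x : A) : qcar th :=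
  exist _ (c0 th x) (ex_intro _ x erefl).

Definition qrep (A : structure) (th : cpair A) (c : qcar th) : A :=
  proj1_sig (constructive_indefinite_description _ (proj2_sig c)).

Definition quotient (A : structure) (th : cpair A) : structure :=
  @Structure (qcar th)
    (fun f cs => qclass th (fop f (fun i => qrep (cs i))))
    (fun r cs => exists s : 'I_(rar r) -> A,
        (forall i, proj1_sig (cs i) = c0 th (s i)) /\ c1 th r s).

Definition K_congruence (K : structure -> Prop) (A : structure) (psi : cpair A) :=
  congruence psi /\ K (quotient psi).

Definition atom_in (A : structure) (psi : cpair A) (a : atom A) : Prop :=
  match a with
  | AEq s t => c0 psi s t
  | ARel r s => c1 psi r s
  end.

Definition cle (A : structure) (th psi : cpair A) : Prop :=
  (forall x y, c0 th x y -> c0 psi x y) /\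
  (forall r s, c1 th r s -> c1 psi r s).

Definition conK (K : structure -> Prop) (A : structure) (S : atom A -> Prop)
  : cpair A :=
  CPair (fun x y => forall psi, K_congruence K psi ->
                      (forall a, S a -> atom_in psi a) -> c0 psi x y)
        (fun r s => forall psi, K_congruence K psi ->
                      (forall a, S a -> atom_in psi a) -> c1 psi r s).

Definition Kjoin (K : structure -> Prop) (A : structure) (l : seq (cpair A))
  : cpair A :=
  CPair (fun x y => forall psi, K_congruence K psi ->
                      (forall th, List.In th l -> cle th psi) -> c0 psi x y)
        (fun r s => forall psi, K_congruence K psi ->
                      (forall th, List.In th l -> cle th psi) -> c1 psi r s).

End Structures.

From Pilot Require Import Defs.
From mathcomp Require Import ssreflect ssrfun ssrbool eqtype ssrnat seq fintype.
From Stdlib Require Import ClassicalEpsilon FunctionalExtensionality PropExtensionality ProofIrrelevance.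

(* The preimage of a K-congruence psi under a homomorphism h : A -> B is again a
   K-congruence: A / h^-1(psi) embeds into B / psi, and quasivarieties are closed
   under substructures.  Given a K-congruence psi of F above every
   con_K(eps beta_j), its preimage under eps contains every beta_j, hence lies above
   the join, hence contains alpha; that is, psi contains eps alpha. *)

Set Implicit Arguments. Unset Strict Implicit.

Section Development.
Variable sg : signature.

Definition embedding (A B : structure sg) (j : A -> B) : Prop :=
  [/\ forall f (s : 'I_(far f) -> A), j (fop s) = fop (fun i => j (s i)),
      injective j &
      forall r (s : 'I_(rar r) -> A), Defs.frel s <-> Defs.frel (fun i => j (s i))].

Lemma eval_morph (A B : structure sg) (j : A -> B) (v : nat -> A) (t : term sg) :
  (forall f (s : 'I_(far f) -> A), j (fop s) = fop (fun i => j (s i))) ->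
  eval (fun n => j (v n)) t = j (eval v t).
Proof.
move=> jop; elim: t => [n|f ts IH] //=.
by rewrite jop; congr fop; apply: functional_extensionality => i; rewrite IH.
Qed.

Lemma holds_embedding (A B : structure sg) (j : A -> B) (v : nat -> A) a :
  embedding j -> holds (fun n => j (v n)) a <-> holds v a.
Proof.
case=> jop jinj jrel; case: a => [s t|r s] /=.
  by rewrite !eval_morph //; split=> [/jinj|->].
have -> : (fun i => eval (fun n => j (v n)) (s i)) = (fun i => j (eval v (s i))).
  by apply: functional_extensionality => i; rewrite eval_morph.
by rewrite -jrel.
Qed.

Lemma satisfies_embedding (A B : structure sg) (j : A -> B) q :
  embedding j -> satisfies B q -> satisfies A q.
Proof.
move=> jemb Bq v vq; apply/(holds_embedding _ _ jemb); apply: Bq => a qa.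
by apply/holds_embedding; last exact: vq.
Qed.

Lemma quasivariety_embedding (K : structure sg -> Prop) (A B : structure sg)
    (j : A -> B) :
  quasivariety K -> embedding j -> K B -> K A.
Proof.
move=> [Q KQ] jemb KB; apply/KQ => q Qq.
exact: satisfies_embedding jemb (proj1 (KQ B) KB q Qq).
Qed.

Section Quotient.
Variables (A : structure sg) (th : cpair A).
Hypothesis th_cong : congruence th.

Lemma qrepP (c : qcar th) : proj1_sig c = c0 th (qrep c).
Proof. by rewrite /qrep; case: constructive_indefinite_description. Qed.

Lemma qclassP x y : qclass th x = qclass th y <-> c0 th x y.
Proof.
have [refl [sym [trans _]]] := th_cong.
split=> [/(congr1 (@proj1_sig _ _)) /= ->|xy]; first exact: refl.
apply: eq_exist_uncurried; exists (functional_extensionality _ _ (fun z =>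
  propositional_extensionality _ _ (conj (trans _ _ _ (sym _ _ xy)) (trans _ _ _ xy)))).
exact: proof_irrelevance.
Qed.

Lemma qrepK (c : qcar th) : qclass th (qrep c) = c.
Proof.
case: c => P Pex; apply: eq_exist_uncurried.
by exists (esym (qrepP (exist _ P Pex))); apply: proof_irrelevance.
Qed.

Lemma qrep_qclass x : c0 th (qrep (qclass th x)) x.
Proof. by apply/qclassP; rewrite qrepK. Qed.

Lemma c1_compat r (s t : 'I_(rar r) -> A) :
  (forall i, c0 th (s i) (t i)) -> c1 th s <-> c1 th t.
Proof.
have [_ [sym [_ [_ [_ clos]]]]] := th_cong.
by move=> st; split=> rel; apply: clos rel _ => i //; apply: sym.
Qed.

Lemma quotient_frelE r (cs : 'I_(rar r) -> quotient th) :
  Defs.frel cs <-> c1 th (fun i => qrep (cs i)).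
Proof.
split=> [[s [cs_s rs]]|rq]; last by exists (fun i => qrep (cs i)); split=> // i; apply: qrepP.
have s_rep i : c0 th (s i) (qrep (cs i)).
  apply/qclassP; rewrite qrepK; move: (cs i) (cs_s i) => [P Pex] /= PE.
  by apply: eq_exist_uncurried; exists (esym PE); apply: proof_irrelevance.
exact: (c1_compat s_rep).1 rs.
Qed.

End Quotient.

Section Preimage.
Variables (A B : structure sg) (h : A -> B) (psi : cpair B).
Hypotheses (h_hom : hom h) (psi_cong : congruence psi).

Definition preimage : cpair A :=
  CPair (fun x y => c0 psi (h x) (h y)) (fun r s => c1 psi (fun i => h (s i))).

Lemma atom_in_preimage a : atom_in preimage a <-> atom_in psi (atom_map h a).
Proof. by case: a. Qed.

Lemma preimage_congruence : congruence preimage.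
Proof.
have [hop hrel] := h_hom.
have [refl [sym [trans [comp [rel clos]]]]] := psi_cong.
split=> [x|]; first exact: refl.
split=> [x y|]; first exact: sym.
split=> [x y z|]; first exact: trans.
split=> [f s t st /=|]; first by rewrite !hop; apply: comp.
split=> [r s rs /=|r s t /= rs st]; first by apply: rel; apply: hrel.
exact: clos rs _.
Qed.

Definition quotient_preimage_map (c : qcar preimage) : qcar psi :=
  qclass psi (h (qrep c)).

Lemma quotient_preimage_map_class x :
  quotient_preimage_map (qclass preimage x) = qclass psi (h x).
Proof. exact/(qclassP psi_cong)/(qrep_qclass preimage_congruence). Qed.

Lemma quotient_preimage_embedding :
  @embedding (quotient preimage) (quotient psi) quotient_preimage_map.
Proof.
have pre_cong := preimage_congruence.
have [hop _] := h_hom.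
have [_ [sym [_ [comp _]]]] := psi_cong.
split.
- move=> f cs /=; rewrite quotient_preimage_map_class hop; apply/(qclassP psi_cong).
  by apply: comp => i; apply/sym/(qrep_qclass psi_cong).
- move=> c d /(qclassP psi_cong) cd.
  by rewrite -(qrepK c) -(qrepK d); apply/qclassP.
- move=> r cs; rewrite (quotient_frelE pre_cong) (quotient_frelE psi_cong) /=.
  by apply: c1_compat => // i; apply/sym/(qrep_qclass psi_cong).
Qed.

End Preimage.

Lemma K_congruence_preimage (K : structure sg -> Prop) (A B : structure sg)
    (h : A -> B) (psi : cpair B) :
  quasivariety K -> hom h -> K_congruence K psi -> K_congruence K (preimage h psi).
Proof.
move=> qvK h_hom [psi_cong Kpsi]; split; first exact: preimage_congruence.
exact: quasivariety_embedding qvK (quotient_preimage_embedding h_hom psi_cong) Kpsi.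
Qed.

Section ConK.
Variables (K : structure sg -> Prop) (A : structure sg).

Lemma atom_in_cle (th psi : cpair A) a : cle th psi -> atom_in th a -> atom_in psi a.
Proof. by case: a => [s t|r s] [le0 le1]; [apply: le0 | apply: le1]. Qed.

Lemma atom_in_conK1 (a : atom sg A) : atom_in (conK K (fun b => b = a)) a.
Proof. by case: a => [s t|r s] /= psi _ con_a; apply: (con_a _ erefl). Qed.

Lemma conK1_cle (psi : cpair A) a :
  K_congruence K psi -> atom_in psi a -> cle (conK K (fun b => b = a)) psi.
Proof. by move=> Kpsi psia; split=> [x y|r s] con_a; apply: (con_a psi Kpsi) => _ ->. Qed.

Lemma atom_in_Kjoin (l : seq (cpair A)) (psi : cpair A) a :
  atom_in (Kjoin K l) a -> K_congruence K psi ->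
  (forall th, List.In th l -> cle th psi) -> atom_in psi a.
Proof. by case: a => [s t|r s] /= la Kpsi lpsi; apply: la. Qed.

Lemma conK1_cle_Kjoin (l : seq (cpair A)) a :
  (forall psi, K_congruence K psi -> (forall th, List.In th l -> cle th psi) ->
     atom_in psi a) ->
  cle (conK K (fun b => b = a)) (Kjoin K l).
Proof.
by move=> la; split=> [x y|r s] con_a psi Kpsi lpsi; apply: (con_a psi Kpsi) => _ ->; apply: la.
Qed.

End ConK.
End Development.

Theorem lemma3p1 (sg : signature) (K : structure sg -> Prop) (F : structure sg)
  (eps : F -> F) (alpha : atom sg F) (betas : seq (atom sg F)) :
  quasivariety K -> K_free K F -> hom eps ->
  cle (conK K (fun a => a = alpha))
      (Kjoin K [seq conK K (fun a => a = b) | b <- betas]) ->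
  cle (conK K (fun a => a = atom_map eps alpha))
      (Kjoin K [seq conK K (fun a => a = atom_map eps b) | b <- betas]).
Proof.
move=> qvK _ eps_hom alpha_le; apply: conK1_cle_Kjoin => psi Kpsi psi_ge.
have Kpre := K_congruence_preimage qvK eps_hom Kpsi.
apply/(atom_in_preimage eps psi); apply: (atom_in_Kjoin _ Kpre).
  exact: atom_in_cle alpha_le (atom_in_conK1 _ _).
move=> _ /List.in_map_iff [b [<- betas_b]]; apply: (conK1_cle Kpre).
apply/atom_in_preimage/(atom_in_cle (psi_ge _ _) (atom_in_conK1 _ _)).
by apply/List.in_map_iff; exists b.
Qed.
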